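(* Let $k\ge0$ and $L\subseteq\mathrm{iiPoms}_{\le k}$. For $P\in\mathrm{iiPoms}_{\le k}$ let $P\backslash L=\{Q\in\mathrm{iiPoms}_{\le k}\mid S_Q=T_P,\ P*Q\in L\}$ and $\mathrm{suff}(L)=\{P\backslash L\mid P\in\mathrm{iiPoms}_{\le k}\}$. Then $\mathrm{suff}(L)$ is an $\mathrm{iiPoms}_{\le k}$-module via $\mathrm{src}(P\backslash L)=S_P$, $\mathrm{tgt}(P\backslash L)=T_P$, $(P\backslash L)\cdot Q=(P*Q)\backslash L$, and the triple $(\mathrm{suff}(L),J,\varphi)$ with $J=\{P\backslash L\mid P\in L\}$ and $\varphi(P)=P\backslash L$ recognizes $L$, i.e. $\varphi$ is a module homomorphism and $L=\varphi^{-1}(J)$. Moreover, for any $\mathrm{iiPoms}_{\le k}$-module $M$, subset $K\subseteq M$ and surjective module homomorphism $\psi:\mathrm{iiPoms}_{\le k}\to M$ with $L=\psi^{-1}(K)$, there is a module homomorphism $f:M\to\mathrm{suff}(L)$ such that $f(M)=\mathrm{suff}(L)$, $f(K)=J$ and $f\circ\psi=\varphi$.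
   Context: Fix a finite alphabet $\Sigma$. Pomsets $(P,<,\dashrightarrow,\lambda,S,T)$: $P$ finite, $<$ a strict partial interval order, $\dashrightarrow$ acyclic relating (in one direction) distinct $<$-incomparable elements, $\lambda:P\to\Sigma$, $S$/$T$ sets of $<$-minimal/maximal elements viewed as conclists (finite totally ordered labelled sets), up to isomorphism. $\mathrm{iiPoms}$ is the category with objects conclists, morphisms $U\to V$ the pomsets with source $U$ and target $V$, composition the gluing $P*Q$ (identify $T_P$ with $S_Q$; precedence $<_P\cup<_Q\cup(P\setminus T_P)\times(Q\setminus S_Q)$; event orders and labels united; source $S_P$, target $T_Q$), identities $\mathrm{id}_U=(U,\emptyset,\dashrightarrow,\lambda,U,U)$. $\mathrm{iiPoms}_{\le k}$: pomsets whose $<$-antichains have size $\le k$. A $\mathcal C$-module ($\mathcal C$ small category) is a set $M$ with $\mathrm{src},\mathrm{tgt}:M\to\mathrm{Ob}(\mathcal C)$ and actions $M(U,V)\times\mathcal C(V,W)\to M(U,W)$ ($M(U,V)=\mathrm{src}^{-1}(U)\cap\mathrm{tgt}^{-1}(V)$), $(m,\alpha)\mapsto m\cdot\alpha$, with $m\cdot\mathrm{id}_V=m$ and $(m\cdot\alpha)\cdot\beta=m\cdot(\alpha\beta)$ (composition written diagrammatically). A homomorphism preserves $\mathrm{src},\mathrm{tgt}$ and commutes with the action. $\mathrm{iiPoms}_{\le k}$ is a module over itself via $\mathrm{src}(P)=S_P$, $\mathrm{tgt}(P)=T_P$, $P\cdot Q=P*Q$. An element $P\backslash L$ of $\mathrm{suff}(L)$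 is understood as carrying its interfaces $(S_P,T_P)$, so that $\mathrm{src},\mathrm{tgt}$ are well defined. *)

From HB Require Import structures.
From mathcomp Require Import all_boot.
From Stdlib Require Import ClassicalEpsilon.

Set Implicit Arguments.
Unset Strict Implicit.
Unset Printing Implicit Defensive.

Record pom (Sigma : finType) := Pom {
  pev : finType;
  plt : rel pev;
  pevo : rel pev;
  plab : pev -> Sigma;
  pS : {set pev};
  pT : {set pev} }.

Arguments Pom {Sigma} pev plt pevo plab pS pT.
Arguments pev {Sigma} p.
Arguments plt {Sigma} p.
Arguments pevo {Sigma} p.
Arguments plab {Sigma} p.
Arguments pS {Sigma} p.
Arguments pT {Sigma} p.

Definition pom_iso (Sigma : finType) (P Q : pom Sigma) : Prop :=
  exists f : pev P -> pev Q, bijective f /\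
    (forall x y, plt Q (f x) (f y) = plt P x y) /\
    (forall x y, pevo Q (f x) (f y) = pevo P x y) /\
    (forall x, plab Q (f x) = plab P x) /\
    (forall x, (f x \in pS Q) = (x \in pS P)) /\
    (forall x, (f x \in pT Q) = (x \in pT P)).

Definition antichain (Sigma : finType) (P : pom Sigma) (A : {set pev P}) : bool :=
  [forall x in A, forall y in A, ~~ plt P x y].

(* P is an interval ipomset all of whose <-antichains have size <= k *)
Definition valid (Sigma : finType) (k : nat) (P : pom Sigma) : Prop :=
  irreflexive (plt P) /\ transitive (plt P) /\
  (* interval order (2+2-free) *)
  (forall w x y z, plt P w y -> plt P x z -> plt P w z || plt P x y) /\
  (forall x y, pevo P x y -> [&& x != y, ~~ plt P x y & ~~ plt P y x]) /\
  (forall x y, x != y -> ~~ plt P x y -> ~~ plt P y x -> pevo P x y || pevo P y x) /\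
  (forall x y, pevo P x y -> ~~ connect (pevo P) y x) /\
  (forall x, x \in pS P -> forall y, ~~ plt P y x) /\
  (forall x, x \in pT P -> forall y, ~~ plt P x y) /\
  (forall A : {set pev P}, antichain A -> #|A| <= k).

(* conclists up to isomorphism are words over Sigma; the conclist of an
   interface A is its list of labels ordered by the event order *)
Definition rank (Sigma : finType) (P : pom Sigma) (A : {set pev P}) (x : pev P) : nat :=
  #|[set z in A | pevo P z x]|.

Definition word (Sigma : finType) (P : pom Sigma) (A : {set pev P}) : seq Sigma :=
  map (plab P) (sort (fun x y => rank A x <= rank A y) (enum A)).

Definition gcar (Sigma : finType) (P Q : pom Sigma) : finType :=
  (pev P + {y : pev Q | y \notin pS Q})%type.

(* x in T_P corresponds to s in S_Q (same position in the conclists) *)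
Definition corr (Sigma : finType) (P Q : pom Sigma) (x : pev P) (s : pev Q) : bool :=
  [&& x \in pT P, s \in pS Q & rank (pT P) x == rank (pS Q) s].

Definition glt (Sigma : finType) (P Q : pom Sigma) (u v : gcar P Q) : bool :=
  match u, v with
  | inl x, inl x' => plt P x x' ||
      [exists s, exists s', [&& corr x s, corr x' s' & plt Q s s']]
  | inl x, inr y => (x \notin pT P) || [exists s, corr x s && plt Q s (val y)]
  | inr y, inl x => [exists s, corr x s && plt Q (val y) s]
  | inr y, inr y' => plt Q (val y) (val y')
  end.

Definition gevo (Sigma : finType) (P Q : pom Sigma) (u v : gcar P Q) : bool :=
  match u, v with
  | inl x, inl x' => pevo P x x' ||
      [exists s, exists s', [&& corr x s, corr x' s' & pevo Q s s']]
  | inl x, inr y => [exists s, corr x s && pevo Q s (val y)]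
  | inr y, inl x => [exists s, corr x s && pevo Q (val y) s]
  | inr y, inr y' => pevo Q (val y) (val y')
  end.

Definition glab (Sigma : finType) (P Q : pom Sigma) (u : gcar P Q) : Sigma :=
  match u with inl x => plab P x | inr y => plab Q (val y) end.

Definition gS (Sigma : finType) (P Q : pom Sigma) : {set gcar P Q} :=
  [set u | if u is inl x then x \in pS P else false].

Definition gT (Sigma : finType) (P Q : pom Sigma) : {set gcar P Q} :=
  [set u | match u with
           | inl x => [exists s, corr x s && (s \in pT Q)]
           | inr y => val y \in pT Q end].

Definition glue (Sigma : finType) (P Q : pom Sigma) : pom Sigma :=
  @Pom Sigma (gcar P Q) (@glt _ P Q) (@gevo _ P Q) (@glab _ P Q) (gS P Q) (gT P Q).

Definition idpom (Sigma : finType) (U : seq Sigma) : pom Sigma :=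
  @Pom Sigma 'I_(size U) (fun _ _ => false) (fun i j => (i < j)%N)
       (fun i => tnth (in_tuple U) i) setT setT.

Definition iipk (Sigma : finType) (k : nat) : Type :=
  { A : pom Sigma -> Prop | exists p, valid k p /\ A = pom_iso p }.

Definition rep (Sigma : finType) (k : nat) (a : iipk Sigma k) : pom Sigma :=
  proj1_sig (constructive_indefinite_description _ (proj2_sig a)).

Definition isrc (Sigma : finType) (k : nat) (a : iipk Sigma k) : seq Sigma :=
  word (pS (rep a)).
Definition itgt (Sigma : finType) (k : nat) (a : iipk Sigma k) : seq Sigma :=
  word (pT (rep a)).

(* composition (gluing) of classes; the fallback branch is only reached
   when the gluing is not in iiPoms_{<=k} (e.g. mismatching interfaces) *)
Definition icomp (Sigma : finType) (k : nat) (a b : iipk Sigma k) : iipk Sigma k :=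
  match excluded_middle_informative
          (exists p, valid k p /\ pom_iso (glue (rep a) (rep b)) = pom_iso p) with
  | left h => exist _ (pom_iso (glue (rep a) (rep b))) h
  | right _ => a
  end.

Definition is_id (Sigma : finType) (k : nat) (a : iipk Sigma k) (U : seq Sigma) : Prop :=
  proj1_sig a = pom_iso (idpom U).

Record is_module (Sigma : finType) (k : nat) (M : Type)
    (msrc mtgt : M -> seq Sigma) (act : M -> iipk Sigma k -> M) : Prop := {
  mod_srctgt : forall m a, mtgt m = isrc a ->
      msrc (act m a) = msrc m /\ mtgt (act m a) = itgt a;
  mod_id : forall m a, is_id a (mtgt m) -> act m a = m;
  mod_assoc : forall m a b, mtgt m = isrc a -> itgt a = isrc b ->
      act (act m a) b = act m (icomp a b) }.

Definition is_hom (Sigma : finType) (k : nat) (M N : Type)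
    (msrc mtgt : M -> seq Sigma) (mact : M -> iipk Sigma k -> M)
    (nsrc ntgt : N -> seq Sigma) (nact : N -> iipk Sigma k -> N)
    (f : M -> N) : Prop :=
  (forall m, nsrc (f m) = msrc m /\ ntgt (f m) = mtgt m) /\
  (forall m a, mtgt m = isrc a -> f (mact m a) = nact (f m) a).

(* P\L together with its interfaces (S_P, T_P) *)
Definition quo (Sigma : finType) (k : nat) (L : iipk Sigma k -> Prop) (P : iipk Sigma k)
  : seq Sigma * seq Sigma * (iipk Sigma k -> Prop) :=
  (isrc P, itgt P, fun Q => isrc Q = itgt P /\ L (icomp P Q)).

Definition suff (Sigma : finType) (k : nat) (L : iipk Sigma k -> Prop) : Type :=
  { t | exists P, t = quo L P }.

Definition phi (Sigma : finType) (k : nat) (L : iipk Sigma k -> Prop) (P : iipk Sigma k)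
  : suff L := exist _ (quo L P) (ex_intro _ P erefl).

Definition srep (Sigma : finType) (k : nat) (L : iipk Sigma k -> Prop) (t : suff L)
  : iipk Sigma k :=
  proj1_sig (constructive_indefinite_description _ (proj2_sig t)).

Definition ssrc (Sigma : finType) (k : nat) (L : iipk Sigma k -> Prop) (t : suff L)
  : seq Sigma := (proj1_sig t).1.1.
Definition stgt (Sigma : finType) (k : nat) (L : iipk Sigma k -> Prop) (t : suff L)
  : seq Sigma := (proj1_sig t).1.2.

(* (P\L) . Q = (P*Q)\L, computed on a chosen representative P *)
Definition sact (Sigma : finType) (k : nat) (L : iipk Sigma k -> Prop) (t : suff L)
  (Q : iipk Sigma k) : suff L := phi L (icomp (srep t) Q).

Definition Jset (Sigma : finType) (k : nat) (L : iipk Sigma k -> Prop) (t : suff L) : Prop :=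
  exists P, L P /\ t = phi L P.

(* The gluing of two interval ipomsets
   of width <= k along matching interfaces is again one: its event order is
   acyclic by a lexicographic height argument, and an antichain of the gluing
   embeds into an antichain of one of the factors.  Gluing respects isomorphism,
   is associative up to the evident isomorphism, and has the identity pomsets as
   units.  Hence P\L determines (P*Q)\L (as R is in it iff P*(Q*R) is in L), so
   the action on suff(L) is well defined, and gluing the identity on T_P shows
   L = phi^-1(J).  If psi is a surjective homomorphism with L = psi^-1(K), then
   Q is in P\L iff K (psi P . Q), so psi P = psi P' forces P\L = P'\L and
   f (psi P) := P\L is a well-defined homomorphism. *)

From mathcomp Require Import all_boot zify.
From Stdlib Require Import ClassicalEpsilon FunctionalExtensionality.
From Stdlib Require Import PropExtensionality ProofIrrelevance.

Set Implicit Arguments.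
Unset Strict Implicit.
Unset Printing Implicit Defensive.

Record evo_linear (Sigma : finType) (P : pom Sigma) (A : {set pev P}) : Prop :=
  EvoLinear {
    evo_total : forall x y, x \in A -> y \in A -> x != y -> pevo P x y || pevo P y x;
    evo_irr : forall x, x \in A -> ~~ pevo P x x;
    evo_trans : forall x y z, x \in A -> y \in A -> z \in A ->
      pevo P x y -> pevo P y z -> pevo P x z }.

Section Rank.
Variables (Sigma : finType) (P : pom Sigma) (A : {set pev P}).

Lemma size_word : size (word A) = #|A|.
Proof. by rewrite /word size_map size_sort cardE. Qed.

Hypothesis linA : evo_linear A.

Lemma rank_lt x y : x \in A -> y \in A -> pevo P x y -> rank A x < rank A y.
Proof.
move=> xA yA xy; apply: proper_card; apply/properP; split.
  apply/subsetP=> z; rewrite !inE => /andP[zA zx]; rewrite zA /=.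
  exact: (evo_trans linA zA xA yA).
by exists x; rewrite !inE xA //= (negbTE (evo_irr linA xA)).
Qed.

Lemma rank_ltE x y : x \in A -> y \in A -> (rank A x < rank A y) = pevo P x y.
Proof.
move=> xA yA; apply/idP/idP; last exact: rank_lt.
move=> lt; case: (eqVneq x y) => [exy|nxy]; first by rewrite exy ltnn in lt.
case/orP: (evo_total linA xA yA nxy) => // yx.
by have := rank_lt yA xA yx; rewrite ltnNge (ltnW lt).
Qed.

Lemma rank_inj : {in A &, injective (rank A)}.
Proof.
move=> x y xA yA e; apply/eqP; apply/negP=> /negP nxy.
by case/orP: (evo_total linA xA yA nxy) => [/(rank_lt xA yA)|/(rank_lt yA xA)];
  rewrite e ltnn.
Qed.

Lemma rank_lt_card x : x \in A -> rank A x < #|A|.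
Proof.
move=> xA; apply: proper_card; apply/properP; split.
  by apply/subsetP=> z; rewrite inE => /andP[].
by exists x => //; rewrite inE xA (negbTE (evo_irr linA xA)).
Qed.

Let rank_sort := sort (fun x y => rank A x <= rank A y) (enum A).

Lemma map_rank_sort : map (rank A) rank_sort = iota 0 #|A|.
Proof.
have memA z : z \in rank_sort -> z \in A by rewrite mem_sort mem_enum.
have uniq_ranks : uniq (map (rank A) rank_sort).
  rewrite map_inj_in_uniq ?sort_uniq ?enum_uniq //.
  by move=> x y /memA xA /memA yA; apply: rank_inj.
have [_ eq_ranks] : ((size (map (rank A) rank_sort) = size (iota 0 #|A|)) *
    (map (rank A) rank_sort =i iota 0 #|A|))%type.
  apply: uniq_min_size uniq_ranks _ _; last first.
    by rewrite size_iota size_map size_sort cardE.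
  by move=> i /mapP[x /memA xA ->]; rewrite mem_iota add0n rank_lt_card.
apply: (sorted_eq leq_trans anti_leq); last exact: uniq_perm (iota_uniq _ _) _.
- by rewrite sorted_map; apply: sort_sorted => x y; apply: leq_total.
- exact: iota_sorted.
Qed.

Lemma rank_surj i : i < #|A| -> exists2 x, x \in A & rank A x = i.
Proof.
move=> lti; have : i \in iota 0 #|A| by rewrite mem_iota.
by rewrite -map_rank_sort => /mapP[x]; rewrite mem_sort mem_enum => xA ->; exists x.
Qed.

Lemma nth_word x d : x \in A -> nth d (word A) (rank A x) = plab P x.
Proof.
move=> xA; have xs : x \in rank_sort by rewrite mem_sort mem_enum.
have ri : rank A x = index x rank_sort.
  have := congr1 (nth 0 ^~ (index x rank_sort)) map_rank_sort.
  rewrite (nth_map x) ?index_mem // nth_index // nth_iota ?add0n //.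
  by rewrite cardE -(size_sort (fun x y => rank A x <= rank A y)) index_mem.
by rewrite ri /word (nth_map x) ?index_mem // nth_index.
Qed.

End Rank.

Section WordTransport.
Variables (Sigma : finType) (P Q : pom Sigma) (A : {set pev P}) (B : {set pev Q}).
Variable R : pev P -> pev Q -> bool.
Hypotheses (linA : evo_linear A) (linB : evo_linear B).
Hypothesis R_totl : forall x, x \in A -> exists2 y, y \in B & R x y.
Hypothesis R_surj : forall y, y \in B -> exists2 x, x \in A & R x y.
Hypothesis R_evo : forall x y x' y', x \in A -> y \in B -> x' \in A -> y' \in B ->
  R x y -> R x' y' -> pevo Q y y' = pevo P x x'.

Lemma rel_functional x y y' :
  x \in A -> y \in B -> y' \in B -> R x y -> R x y' -> y = y'.
Proof.
move=> xA yB y'B r1 r2; apply/eqP; apply/negP=> /negP ne.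
move: (evo_total linB yB y'B ne).
rewrite (R_evo xA yB xA y'B r1 r2) (R_evo xA y'B xA yB r2 r1).
by rewrite orbb (negbTE (evo_irr linA xA)).
Qed.

Lemma rel_injective x x' y :
  x \in A -> x' \in A -> y \in B -> R x y -> R x' y -> x = x'.
Proof.
move=> xA x'A yB r1 r2; apply/eqP; apply/negP=> /negP ne.
move: (evo_total linA xA x'A ne).
rewrite -(R_evo xA yB x'A yB r1 r2) -(R_evo x'A yB xA yB r2 r1).
by rewrite orbb (negbTE (evo_irr linB yB)).
Qed.

Lemma rel_rank_card x y : x \in A -> y \in B -> R x y ->
  rank A x = rank B y /\ #|A| = #|B|.
Proof.
move=> xA yB rxy.
pose f z := odflt y [pick w in B | R z w].
have fP z : z \in A -> f z \in B /\ R z (f z).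
  move=> zA; rewrite /f; case: pickP => [w /andP[]|noR] //=.
  by case: (R_totl zA) => w wB rw; move: (noR w); rewrite wB rw.
have finj : {in A &, injective f}.
  move=> z z' zA z'A e; have [f1 r1] := fP z zA; have [f2 r2] := fP z' z'A.
  by apply: (rel_injective zA z'A f1 r1); rewrite e.
have f_image (C : {set pev P}) (D : {set pev Q}) : C \subset A -> D \subset B ->
    (forall z w, z \in A -> w \in B -> R z w -> (z \in C) = (w \in D)) -> f @: C = D.
  move=> /subsetP CA /subsetP DB CD; apply/setP=> w; apply/imsetP/idP.
    case=> z zC ->; have [f1 r1] := fP z (CA _ zC).
    by rewrite -(CD z _ (CA _ zC) f1 r1).
  move=> wD; case: (R_surj (DB _ wD)) => z zA rzw; have [f1 r1] := fP z zA.
  have wB := DB _ wD; exists z; last by rewrite (rel_functional zA f1 wB r1 rzw).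
  by rewrite (CD z w zA wB rzw).
split; last by rewrite -(f_image A B) ?subxx ?card_in_imset // => z w -> ->.
rewrite /rank -(f_image [set z in A | pevo P z x] [set w in B | pevo Q w y]).
- by rewrite card_in_imset // => z z' /setIdP[zA _] /setIdP[z'A _]; apply: finj.
- by apply/subsetP=> z /setIdP[].
- by apply/subsetP=> z /setIdP[].
- by move=> z w zA wB rzw; rewrite !inE zA wB (R_evo zA wB xA yB rzw rxy).
Qed.

Lemma eq_word_rel :
  (forall x y, x \in A -> y \in B -> R x y -> plab Q y = plab P x) -> word A = word B.
Proof.
move=> R_lab; case: (set_0Vmem A) => [A0|[x0 x0A]].
  have B0 : B = set0.
    by apply/setP=> y; rewrite inE; apply/negP=> /R_surj[x]; rewrite A0 inE.
  have /size0nil -> : size (word A) = 0 by rewrite size_word A0 cards0.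
  by have /size0nil -> : size (word B) = 0 by rewrite size_word B0 cards0.
case: (R_totl x0A) => y0 y0B r0; have [_ cardAB] := rel_rank_card x0A y0B r0.
apply: (@eq_from_nth _ (plab P x0)); first by rewrite !size_word.
move=> i; rewrite size_word => /(rank_surj linA)[x xA <-].
case: (R_totl xA) => y yB rxy; have [rank_xy _] := rel_rank_card xA yB rxy.
by rewrite (nth_word linA) // rank_xy (nth_word linB) // (R_lab x y xA yB rxy).
Qed.

End WordTransport.

Section Validity.
Variables (Sigma : finType) (k : nat) (P : pom Sigma).
Hypothesis vP : valid k P.

Lemma valid_irr : irreflexive (plt P).
Proof. by case: vP. Qed.
Lemma valid_trans : transitive (plt P).
Proof. by case: vP => _ []. Qed.
Lemma valid_interval w x y z : plt P w y -> plt P x z -> plt P w z || plt P x y.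
Proof. by case: vP => _ [] _ [] /(_ w x y z). Qed.
Lemma valid_evo x y : pevo P x y -> [&& x != y, ~~ plt P x y & ~~ plt P y x].
Proof. by case: vP => _ [] _ [] _ [] /(_ x y). Qed.
Lemma valid_evo_total x y :
  x != y -> ~~ plt P x y -> ~~ plt P y x -> pevo P x y || pevo P y x.
Proof. by case: vP => _ [] _ [] _ [] _ [] /(_ x y). Qed.
Lemma valid_acyclic x y : pevo P x y -> ~~ connect (pevo P) y x.
Proof. by case: vP => _ [] _ [] _ [] _ [] _ [] /(_ x y). Qed.
Lemma valid_S x : x \in pS P -> forall y, ~~ plt P y x.
Proof. by case: vP => _ [] _ [] _ [] _ [] _ [] _ [] /(_ x). Qed.
Lemma valid_T x : x \in pT P -> forall y, ~~ plt P x y.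
Proof. by case: vP => _ [] _ [] _ [] _ [] _ [] _ [] _ [] /(_ x). Qed.
Lemma valid_width (A : {set pev P}) : antichain A -> #|A| <= k.
Proof. by case: vP => _ [] _ [] _ [] _ [] _ [] _ [] _ [] _ /(_ A). Qed.

Lemma valid_evo_linear (A : {set pev P}) :
  {in A &, forall x y, ~~ plt P x y} -> evo_linear A.
Proof.
move=> nlt; split.
- by move=> x y xA yA ne; apply: valid_evo_total => //; apply: nlt.
- by move=> x _; apply/negP=> /valid_evo; rewrite eqxx.
- move=> x y z xA yA zA xy yz; case: (eqVneq x z) => [exz|nxz].
    by move: (valid_acyclic xy); rewrite exz connect1.
  case/orP: (valid_evo_total nxz (nlt x z xA zA) (nlt z x zA xA)) => // zx.
  by move: (valid_acyclic zx); rewrite (connect_trans (connect1 xy) (connect1 yz)).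
Qed.

Lemma valid_linearS : evo_linear (pS P).
Proof. by apply: valid_evo_linear => x y _ /valid_S. Qed.
Lemma valid_linearT : evo_linear (pT P).
Proof. by apply: valid_evo_linear => x y /valid_T. Qed.

End Validity.

Lemma antichainP (Sigma : finType) (P : pom Sigma) (A : {set pev P}) :
  reflect {in A &, forall x y, ~~ plt P x y} (antichain A).
Proof.
apply: (iffP forallP) => [anti x y xA yA|anti x].
  by move: (anti x); rewrite xA => /forall_inP; apply.
by apply/implyP=> xA; apply/forall_inP=> y yA; apply: anti.
Qed.

Section Heights.
Variables (T : finType) (e : rel T).

Lemma connect_homo (h : T -> nat) :
  (forall x y, e x y -> h x <= h y) -> forall x y, connect e x y -> h x <= h y.
Proof.
move=> mono x y /connectP[p]; elim: p x => [|z p IH] x /=; first by move=> _ ->.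
by case/andP=> exz pz ey; apply: leq_trans (mono _ _ exz) (IH _ pz ey).
Qed.

Lemma acyclic_of_height (h : T -> nat) :
  (forall x y, e x y -> h x < h y) -> forall x y, e x y -> ~~ connect e y x.
Proof.
move=> mono x y exy; apply/negP=> /(connect_homo (fun a b eab => ltnW (mono a b eab))).
by rewrite leqNgt mono.
Qed.

Hypothesis e_acyclic : forall x y, e x y -> ~~ connect e y x.

Lemma card_ancestors_homo (A : {set T}) x y : e x y ->
  #|[set t in A | connect e t x]| <= #|[set t in A | connect e t y]| /\
  (y \in A -> #|[set t in A | connect e t x]| < #|[set t in A | connect e t y]|).
Proof.
move=> exy.
have sub : [set t in A | connect e t x] \subset [set t in A | connect e t y].
  apply/subsetP=> t /setIdP[tA ctx]; rewrite inE tA.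
  exact: connect_trans ctx (connect1 exy).
split=> [|yA]; first exact: subset_leq_card.
apply: proper_card; apply/properP; split=> //.
by exists y; rewrite !inE ?yA ?connect0 ?(negbTE (e_acyclic exy)).
Qed.

End Heights.

Lemma card_ancestors_rank (Sigma : finType) (k : nat) (P : pom Sigma)
    (A : {set pev P}) x :
  valid k P -> evo_linear A -> x \in A ->
  #|[set t in A | connect (pevo P) t x]| = (rank A x).+1.
Proof.
move=> vP linA xA.
have -> : [set t in A | connect (pevo P) t x] = x |: [set t in A | pevo P t x].
  apply/setP=> t; rewrite !inE; case: (eqVneq t x) => [->|ntx] /=.
    by rewrite xA connect0.
  apply/andP/andP=> [[tA ctx]|[tA ptx]]; split=> //; last exact: connect1.
  case/orP: (evo_total linA tA xA ntx) => // pxt.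
  by move: (valid_acyclic vP pxt); rewrite ctx.
by rewrite cardsU1 inE (negbTE (evo_irr linA xA)) andbF add1n.
Qed.

Lemma lex_ltn a a' b b' N :
  a <= a' -> (a < a') || (b < b') -> b < N -> a * N + b < a' * N + b'.
Proof. by move=> le_a /orP[lt_a|lt_b] lt_bN; nia. Qed.
Section Glue.
Variables (Sigma : finType) (k : nat) (p q : pom Sigma).
Hypotheses (vp : valid k p) (vq : valid k q).
Hypothesis cpq : word (pT p) = word (pS q).

Local Notation cr := (@corr Sigma p q).
Local Notation G := (glue p q).
Let linTp := valid_linearT vp.
Let linSq := valid_linearS vq.

Lemma corrT x s : cr x s -> x \in pT p.
Proof. by case/and3P. Qed.
Lemma corrS x s : cr x s -> s \in pS q.
Proof. by case/and3P. Qed.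
Lemma corr_rank x s : cr x s -> rank (pT p) x = rank (pS q) s.
Proof. by case/and3P=> _ _ /eqP. Qed.

Lemma card_TS : #|pT p| = #|pS q|.
Proof. by rewrite -!size_word cpq. Qed.

Lemma corr_exl x : x \in pT p -> exists s, cr x s.
Proof.
move=> xT; have := rank_lt_card linTp xT; rewrite card_TS => lt.
case: (rank_surj linSq lt) => s sS e; exists s; by rewrite /corr xT sS e eqxx.
Qed.

Lemma corr_exr s : s \in pS q -> exists x, cr x s.
Proof.
move=> sS; have := rank_lt_card linSq sS; rewrite -card_TS => lt.
case: (rank_surj linTp lt) => x xT e; exists x; by rewrite /corr xT sS e eqxx.
Qed.

Lemma corr_funl x s s' : cr x s -> cr x s' -> s = s'.
Proof.
move=> c1 c2; apply: (rank_inj linSq (corrS c1) (corrS c2)).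
by rewrite -(corr_rank c1) -(corr_rank c2).
Qed.

Lemma corr_funr x x' s : cr x s -> cr x' s -> x = x'.
Proof.
move=> c1 c2; apply: (rank_inj linTp (corrT c1) (corrT c2)).
by rewrite (corr_rank c1) (corr_rank c2).
Qed.

Lemma corr_evo x s x' s' : cr x s -> cr x' s' -> pevo q s s' = pevo p x x'.
Proof.
move=> c1 c2.
rewrite -(rank_ltE linSq (corrS c1) (corrS c2)) -(rank_ltE linTp (corrT c1) (corrT c2)).
by rewrite (corr_rank c1) (corr_rank c2).
Qed.

Lemma corr_lab x s : cr x s -> plab q s = plab p x.
Proof.
move=> c; have d := plab p x.
rewrite -(nth_word linSq d (corrS c)) -(nth_word linTp d (corrT c)) -cpq.
by rewrite (corr_rank c).
Qed.

Lemma glue_lt_ll x x' : plt G (inl x) (inl x') = plt p x x'.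
Proof.
rewrite /= /glt; case: (plt p x x') => //=; apply/existsP=> [[s /existsP[s']]].
by case/and3P=> _ c2 lt; have := valid_S vq (corrS c2) s; rewrite lt.
Qed.
Lemma glue_lt_rl y x : plt G (inr y) (inl x) = false.
Proof.
rewrite /= /glt; apply/existsP=> [[s /andP[c lt]]].
by have := valid_S vq (corrS c) (val y); rewrite lt.
Qed.
Lemma glue_lt_rr y y' : plt G (inr y) (inr y') = plt q (val y) (val y').
Proof. by []. Qed.
Lemma glue_lt_lrN x y : x \notin pT p -> plt G (inl x) (inr y).
Proof. by rewrite /= /glt => ->. Qed.
Lemma glue_lt_lrT x s : cr x s -> forall y, plt G (inl x) (inr y) = plt q s (val y).
Proof.
move=> c y; rewrite /= /glt (corrT c) /=; apply/existsP/idP=> [[s' /andP[c' lt]]|lt].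
  by rewrite (corr_funl c c').
by exists s; rewrite c.
Qed.

Lemma glue_evo_ll x x' : pevo G (inl x) (inl x') = pevo p x x'.
Proof.
rewrite /= /gevo; case e: (pevo p x x') => //=; apply/existsP=> [[s /existsP[s']]].
by case/and3P=> c1 c2; rewrite (corr_evo c1 c2) e.
Qed.
Lemma glue_evo_rr y y' : pevo G (inr y) (inr y') = pevo q (val y) (val y').
Proof. by []. Qed.
Lemma glue_evo_lrN x y : x \notin pT p -> pevo G (inl x) (inr y) = false.
Proof.
move=> nT; rewrite /= /gevo; apply/existsP=> [[s /andP[c _]]].
by rewrite (corrT c) in nT.
Qed.
Lemma glue_evo_rlN x y : x \notin pT p -> pevo G (inr y) (inl x) = false.
Proof.
move=> nT; rewrite /= /gevo; apply/existsP=> [[s /andP[c _]]].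
by rewrite (corrT c) in nT.
Qed.
Lemma glue_evo_lrT x s : cr x s -> forall y, pevo G (inl x) (inr y) = pevo q s (val y).
Proof.
move=> c y; rewrite /= /gevo; apply/existsP/idP=> [[s' /andP[c' lt]]|lt].
  by rewrite (corr_funl c c').
by exists s; rewrite c.
Qed.
Lemma glue_evo_rlT x s : cr x s -> forall y, pevo G (inr y) (inl x) = pevo q (val y) s.
Proof.
move=> c y; rewrite /= /gevo; apply/existsP/idP=> [[s' /andP[c' lt]]|lt].
  by rewrite (corr_funl c c').
by exists s; rewrite c.
Qed.

Lemma glue_S_l x : (inl x \in pS G) = (x \in pS p).
Proof. by rewrite /= /gS inE. Qed.
Lemma glue_S_r y : (inr y \in pS G) = false.
Proof. by rewrite /= /gS inE. Qed.
Lemma glue_T_r y : (inr y \in pT G) = (val y \in pT q).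
Proof. by rewrite /= /gT inE. Qed.
Lemma glue_T_lN x : x \notin pT p -> (inl x \in pT G) = false.
Proof.
move=> nT; rewrite /= /gT inE; apply/existsP=> [[s /andP[c _]]].
by rewrite (corrT c) in nT.
Qed.
Lemma glue_T_lT x s : cr x s -> (inl x \in pT G) = (s \in pT q).
Proof.
move=> c; rewrite /= /gT inE; apply/existsP/idP=> [[s' /andP[c' lt]]|lt].
  by rewrite (corr_funl c c').
by exists s; rewrite c.
Qed.

Lemma notT_of_lt x y : plt p x y -> x \notin pT p.
Proof. by move=> lt; apply/negP=> xT; move: (valid_T vp xT y); rewrite lt. Qed.

Lemma notT_or_corr x : x \notin pT p \/ exists s, cr x s.
Proof. by case: (boolP (x \in pT p)) => [/corr_exl|]; [right | left]. Qed.

Lemma glue_irr : irreflexive (plt G).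
Proof.
move=> [x|y]; first by rewrite glue_lt_ll (valid_irr vp).
by rewrite glue_lt_rr (valid_irr vq).
Qed.

Lemma glue_trans : transitive (plt G).
Proof.
move=> [y|y] [x|x] [z|z]; rewrite ?glue_lt_ll ?glue_lt_rl ?glue_lt_rr //.
- by move=> h1 h2; apply: (valid_trans vp h1 h2).
- by move=> /notT_of_lt xT _; apply: glue_lt_lrN.
- case: (notT_or_corr x) => [nx _ _|[s c]]; first exact: glue_lt_lrN.
  by rewrite !(glue_lt_lrT c) => h1 h2; apply: (valid_trans vq h1 h2).
- by move=> h1 h2; apply: (valid_trans vq h1 h2).
Qed.

Lemma glue_interval w x y z : plt G w y -> plt G x z -> plt G w z || plt G x y.
Proof.
case: w => [w|w]; case: x => [x|x]; case: y => [y|y]; case: z => [z|z];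
  rewrite ?glue_lt_ll ?glue_lt_rl ?glue_lt_rr ?orbF ?orFb //.
- exact: (valid_interval vp).
- by move=> /notT_of_lt wT _; rewrite glue_lt_lrN.
- by move=> _ /notT_of_lt xT; rewrite glue_lt_lrN ?orbT.
- case: (notT_or_corr w) (notT_or_corr x) => [nw|[sw cw]] [nx|[sx cx]];
    rewrite ?(glue_lt_lrN _ nw) ?(glue_lt_lrN _ nx) ?orbT //.
  by rewrite !(glue_lt_lrT cw) !(glue_lt_lrT cx); exact: (valid_interval vq).
- by move=> /notT_of_lt wT _; apply: glue_lt_lrN.
- case: (notT_or_corr w) => [nw|[sw cw]]; first by rewrite !(glue_lt_lrN _ nw).
  by rewrite !(glue_lt_lrT cw); exact: (valid_interval vq).
- by move=> _ /notT_of_lt xT; apply: glue_lt_lrN.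
- case: (notT_or_corr x) => [nx|[sx cx]]; first by rewrite !(glue_lt_lrN _ nx) orbT.
  by rewrite !(glue_lt_lrT cx); exact: (valid_interval vq).
- exact: (valid_interval vq).
Qed.

Lemma glue_evo_incomparable u v :
  pevo G u v -> [&& u != v, ~~ plt G u v & ~~ plt G v u].
Proof.
case: u => [x|y]; case: v => [x'|y'].
- rewrite glue_evo_ll !glue_lt_ll => /(valid_evo vp) /and3P[ne -> ->].
  by rewrite !andbT; apply: contra ne => /eqP[->].
- case: (notT_or_corr x) => [nx|[s c]]; first by rewrite glue_evo_lrN.
  rewrite (glue_evo_lrT c) (glue_lt_lrT c) glue_lt_rl.
  by move=> /(valid_evo vq) /and3P[_ -> _].
- case: (notT_or_corr x') => [nx|[s c]]; first by rewrite glue_evo_rlN.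
  rewrite (glue_evo_rlT c) (glue_lt_lrT c) glue_lt_rl.
  by move=> /(valid_evo vq) /and3P[_ _ ->].
- rewrite glue_evo_rr !glue_lt_rr => /(valid_evo vq) /and3P[ne -> ->].
  by rewrite !andbT; apply: contra ne => /eqP[->].
Qed.

Lemma glue_evo_total u v :
  u != v -> ~~ plt G u v -> ~~ plt G v u -> pevo G u v || pevo G v u.
Proof.
case: u => [x|y]; case: v => [x'|y'].
- rewrite !glue_evo_ll !glue_lt_ll => ne; apply: (valid_evo_total vp).
  by apply: contra ne => /eqP->.
- case: (notT_or_corr x) => [nx|[s c]]; first by rewrite glue_lt_lrN.
  rewrite (glue_evo_lrT c) (glue_evo_rlT c) (glue_lt_lrT c) => _ h _.
  apply: (valid_evo_total vq) (valid_S vq (corrS c) _) => //.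
  by apply: contraNneq (valP y') => <-; apply: corrS c.
- case: (notT_or_corr x') => [nx|[s c]]; first by rewrite glue_lt_lrN.
  rewrite (glue_evo_lrT c) (glue_evo_rlT c) (glue_lt_lrT c) orbC => _ _ h.
  apply: (valid_evo_total vq) (valid_S vq (corrS c) _) => //.
  by apply: contraNneq (valP y) => <-; apply: corrS c.
- rewrite !glue_evo_rr !glue_lt_rr => ne; apply: (valid_evo_total vq).
  by apply: contra ne => /eqP/val_inj->.
Qed.

(* A lexicographic height strictly increasing along the glued event order:
   first the number of interface events at or below an event, then its height
   inside its own factor, interface events of [p] counting as lowest. *)
Let interface_level (u : pev G) : nat :=
  match u with
  | inl x => #|[set t in pT p | connect (pevo p) t x]|
  | inr y => #|[set s in pS q | connect (pevo q) s (val y)]|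
  end.
Let local_height (u : pev G) : nat :=
  match u with
  | inl x => if x \in pT p then 0
             else #|[set t in [set: pev p] | connect (pevo p) t x]|.+1
  | inr y => #|[set t in [set: pev q] | connect (pevo q) t (val y)]|.+1
  end.
Let height_base := #|[set: pev p]| + #|[set: pev q]| + 2.
Let glue_height (u : pev G) := interface_level u * height_base + local_height u.

Lemma local_height_lt u : local_height u < height_base.
Proof.
rewrite /height_base; case: u => [x|y] /=; last first.
  set Y := [set t in [set: pev q] | connect (pevo q) t (sval y)].
  by have := subset_leq_card (subsetT Y); lia.
case: (x \in pT p); first lia.
set X := [set t in [set: pev p] | connect (pevo p) t x].
by have := subset_leq_card (subsetT X); lia.
Qed.

Lemma interface_level_corr x s : cr x s ->
  interface_level (inl x) = #|[set s' in pS q | connect (pevo q) s' s]|.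
Proof.
move=> c /=; rewrite (card_ancestors_rank vp linTp (corrT c)).
by rewrite (card_ancestors_rank vq linSq (corrS c)) (corr_rank c).
Qed.

Lemma glue_height_evo u v : pevo G u v -> glue_height u < glue_height v.
Proof.
have acp := valid_acyclic vp; have acq := valid_acyclic vq.
rewrite /glue_height; case: u => [x|y]; case: v => [x'|y'].
- rewrite glue_evo_ll => e; apply: lex_ltn (local_height_lt _).
    exact: (card_ancestors_homo acp (pT p) e).1.
  case: (boolP (x' \in pT p)) => [x'T|nx'].
    by rewrite /= ((card_ancestors_homo acp (pT p) e).2 x'T).
  rewrite /= (negbTE nx'); case: (x \in pT p); first by rewrite orbT.
  by rewrite ltnS ((card_ancestors_homo acp [set: pev p] e).2 (in_setT _)) orbT.
- case: (boolP (x \in pT p)) => [/corr_exl [s c]|nx]; last by rewrite glue_evo_lrN.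
  rewrite (glue_evo_lrT c) => e; apply: lex_ltn (local_height_lt _).
    by rewrite (interface_level_corr c); apply: (card_ancestors_homo acq (pS q) e).1.
  by rewrite /= (corrT c) orbT.
- case: (boolP (x' \in pT p)) => [/corr_exl [s c]|nx]; last by rewrite glue_evo_rlN.
  rewrite (glue_evo_rlT c) (interface_level_corr c) => e.
  apply: lex_ltn (local_height_lt _); first exact: (card_ancestors_homo acq (pS q) e).1.
  by rewrite /= ((card_ancestors_homo acq (pS q) e).2 (corrS c)).
- rewrite glue_evo_rr => e; apply: lex_ltn (local_height_lt _).
    exact: (card_ancestors_homo acq (pS q) e).1.
  by rewrite /= ltnS ((card_ancestors_homo acq [set: pev q] e).2 (in_setT _)) orbT.
Qed.

Lemma glue_acyclic u v : pevo G u v -> ~~ connect (pevo G) v u.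
Proof. exact: (acyclic_of_height glue_height_evo). Qed.

Lemma glue_S u : u \in pS G -> forall v, ~~ plt G v u.
Proof.
case: u => [x|y]; last by rewrite glue_S_r.
rewrite glue_S_l => xS [x'|y]; first by rewrite glue_lt_ll (valid_S vp xS).
by rewrite glue_lt_rl.
Qed.

Lemma glue_T u : u \in pT G -> forall v, ~~ plt G u v.
Proof.
case: u => [x|y].
  case: (boolP (x \in pT p)) => [xT|nx]; last by rewrite glue_T_lN.
  case: (corr_exl xT) => s c; rewrite (glue_T_lT c) => sT [x'|y].
    by rewrite glue_lt_ll (valid_T vp xT).
  by rewrite (glue_lt_lrT c) (valid_T vq sT).
rewrite glue_T_r => yT [x|y']; first by rewrite glue_lt_rl.
by rewrite glue_lt_rr (valid_T vq yT).
Qed.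

(* A non-interface event of [p] precedes every event of [q], so an antichain
   containing one lies entirely in [p]. *)
Lemma glue_width_p (A : {set pev G}) x0 :
  antichain A -> inl x0 \in A -> x0 \notin pT p -> #|A| <= k.
Proof.
move=> /antichainP anti x0A nx0.
have inlA u : u \in A -> exists x, u = inl x.
  case: u => [x|y] uA; first by exists x.
  by move: (anti _ _ x0A uA); rewrite glue_lt_lrN.
pose f (u : pev G) := if u is inl x then x else x0.
have finj : {in A &, injective f}.
  by move=> u v /inlA[x ->] /inlA[x' ->] /= ->.
rewrite -(card_in_imset finj); apply: (valid_width vp); apply/antichainP.
move=> _ _ /imsetP[u uA ->] /imsetP[v vA ->].
case: (inlA u uA) (inlA v vA) => x ? [x' ?]; subst u v.
by rewrite -glue_lt_ll; apply: anti.
Qed.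

(* Otherwise, sending interface events of [p] to their partners in [S_q]
   embeds the antichain into an antichain of [q]. *)
Lemma glue_width_q (A : {set pev G}) :
  antichain A -> (forall x, inl x \in A -> x \in pT p) -> #|A| <= k.
Proof.
move=> /antichainP anti inlT.
case: (set_0Vmem A) => [->|[u0 u0A]]; first by rewrite cards0.
have [d _] : exists d : pev q, true.
  case: u0 u0A => [x|y] uA; last by exists (val y).
  by case: (corr_exl (inlT x uA)) => s _; exists s.
pose g (u : pev G) :=
  match u with inl x => odflt d [pick s | cr x s] | inr y => val y end.
have gc x : inl x \in A -> cr x (g (inl x)).
  move=> xA /=; case: pickP => [s //|nocr].
  by case: (corr_exl (inlT x xA)) => s c; move: (nocr s); rewrite c.
have ginj : {in A &, injective g}.
  move=> [x|y] [x'|y'] uA vA e.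
  - by have := gc x uA; rewrite e => /(corr_funr (gc x' vA)) ->.
  - by move: (corrS (gc x uA)); rewrite e /= (negbTE (valP y')).
  - by move: (corrS (gc x' vA)); rewrite -e /= (negbTE (valP y)).
  - by rewrite (val_inj e).
rewrite -(card_in_imset ginj); apply: (valid_width vq); apply/antichainP.
move=> _ _ /imsetP[u uA ->] /imsetP[v vA ->].
case: u uA => [x|y] uA; case: v vA => [x'|y'] vA.
- exact: (valid_S vq (corrS (gc x' vA))).
- by move: (anti _ _ uA vA); rewrite (glue_lt_lrT (gc x uA)).
- exact: (valid_S vq (corrS (gc x' vA))).
- by move: (anti _ _ uA vA); rewrite glue_lt_rr.
Qed.

Lemma glue_width (A : {set pev G}) : antichain A -> #|A| <= k.
Proof.
move=> anti; case: (boolP [exists x, (inl x \in A) && (x \notin pT p)]).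
  by case/existsP=> x0 /andP[x0A nx0]; apply: glue_width_p anti x0A nx0.
move=> noP; apply: glue_width_q anti _ => x xA; apply: contraNT noP => nx.
by apply/existsP; exists x; rewrite xA.
Qed.

Lemma glue_valid : valid k G.
Proof.
split; first exact: glue_irr.
split; first exact: glue_trans.
split; first exact: glue_interval.
split; first exact: glue_evo_incomparable.
split; first exact: glue_evo_total.
split; first exact: glue_acyclic.
split; first exact: glue_S.
split; first exact: glue_T.
exact: glue_width.
Qed.

Let vG := glue_valid.

Lemma word_glueS : word (pS G) = word (pS p).
Proof.
apply: (@eq_word_rel _ G p (pS G) (pS p) (fun u x => u == inl x)).
- exact: valid_linearS vG.
- exact: valid_linearS vp.
- move=> [x|y]; last by rewrite glue_S_r.
  by rewrite glue_S_l => xS; exists x.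
- by move=> x xS; exists (inl x); rewrite ?glue_S_l.
- by move=> u x u' x' _ _ _ _ /eqP-> /eqP->; rewrite glue_evo_ll.
- by move=> u x _ _ /eqP->.
Qed.

Definition glueT_rel (u : pev G) (t : pev q) : bool :=
  match u with inl x => cr x t | inr y => val y == t end.

Lemma glueT_rel_exl u : u \in pT G -> exists2 t, t \in pT q & glueT_rel u t.
Proof.
case: u => [x|y].
  case: (boolP (x \in pT p)) => [/corr_exl [s c]|nx]; last by rewrite glue_T_lN.
  by rewrite (glue_T_lT c) => sT; exists s.
by rewrite glue_T_r => yT; exists (val y); rewrite // /glueT_rel eqxx.
Qed.

Lemma glueT_rel_exr t : t \in pT q -> exists2 u, u \in pT G & glueT_rel u t.
Proof.
move=> tT; case: (boolP (t \in pS q)) => [tS|nt].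
  case: (corr_exr tS) => x c; exists (inl x) => //; by rewrite (glue_T_lT c).
by exists (inr (exist _ t nt)); rewrite ?glue_T_r /= /glueT_rel /=.
Qed.

Lemma glueT_rel_evo u t u' t' :
  u \in pT G -> t \in pT q -> u' \in pT G -> t' \in pT q ->
  glueT_rel u t -> glueT_rel u' t' -> pevo q t t' = pevo G u u'.
Proof.
case: u => [x|y]; case: u' => [x'|y'] _ _ _ _ c1 c2; simpl in c1, c2.
+ rewrite glue_evo_ll; exact: corr_evo.
+ by move/eqP: c2 => <-; rewrite (glue_evo_lrT c1).
+ by move/eqP: c1 => <-; rewrite (glue_evo_rlT c2).
+ by move/eqP: c1 => <-; move/eqP: c2 => <-.
Qed.

Lemma glueT_rel_lab u t :
  u \in pT G -> t \in pT q -> glueT_rel u t -> plab q t = plab G u.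
Proof.
case: u => [x|y] _ _ /=; last by move=> /eqP <-.
exact: corr_lab.
Qed.

Lemma word_glueT : word (pT G) = word (pT q).
Proof.
apply: (@eq_word_rel _ G q (pT G) (pT q) glueT_rel).
- exact: valid_linearT vG.
- exact: valid_linearT vq.
- exact: glueT_rel_exl.
- exact: glueT_rel_exr.
- exact: glueT_rel_evo.
- exact: glueT_rel_lab.
Qed.

Lemma rank_glueT u t : u \in pT G -> t \in pT q -> glueT_rel u t ->
  rank (pT G) u = rank (pT q) t.
Proof.
move=> uT tT r.
exact: (rel_rank_card (valid_linearT vG) (valid_linearT vq)
  glueT_rel_exl glueT_rel_exr glueT_rel_evo uT tT r).1.
Qed.

Lemma rank_glueS t : t \in pS p -> rank (pS G) (inl t) = rank (pS p) t.
Proof.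
move=> tS; rewrite /rank.
have -> : [set w in pS G | pevo G w (inl t)] = inl @: [set t' in pS p | pevo p t' t].
  apply/setP=> [[t'|z]]; rewrite inE.
    by rewrite mem_imset; [rewrite inE glue_S_l glue_evo_ll | move=> a b [] ].
  rewrite glue_S_r /=; apply/esym/imsetP=> [[? _]] //.
by rewrite card_imset //; move=> a b [].
Qed.
End Glue.
Section Iso.
Variable Sigma : finType.
Implicit Types P Q R : pom Sigma.

Lemma iso_refl P : pom_iso P P.
Proof.
exists id; split; first exact: (Bijective (g:=id)).
by do !split.
Qed.

Lemma iso_sym P Q : pom_iso P Q -> pom_iso Q P.
Proof.
case=> f [[g fK gK] [hl [he [hb [hS hT]]]]].
exists g; split; first exact: (Bijective gK fK).
split; first by move=> x y; rewrite -hl !gK.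
split; first by move=> x y; rewrite -he !gK.
split; first by move=> x; rewrite -hb gK.
split; first by move=> x; rewrite -hS gK.
by move=> x; rewrite -hT gK.
Qed.

Lemma iso_trans P Q R : pom_iso P Q -> pom_iso Q R -> pom_iso P R.
Proof.
case=> f [fB [fl [fe [fb [fS fT]]]]]; case=> g [gB [gl [ge [gb [gS gT]]]]].
exists (g \o f); split; first exact: bij_comp.
split; first by move=> x y /=; rewrite gl fl.
split; first by move=> x y /=; rewrite ge fe.
split; first by move=> x /=; rewrite gb fb.
split; first by move=> x /=; rewrite gS fS.
by move=> x /=; rewrite gT fT.
Qed.

Lemma rank_bij P Q (A : {set pev P}) (B : {set pev Q}) (f : pev P -> pev Q) :
  bijective f -> (forall x, (f x \in B) = (x \in A)) ->
  (forall x y, pevo Q (f x) (f y) = pevo P x y) ->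
  forall x, rank B (f x) = rank A x.
Proof.
move=> fB fAB fe x; rewrite /rank.
have -> : [set z in B | pevo Q z (f x)] = f @: [set z in A | pevo P z x].
  apply/setP=> z; case: fB => g fK gK.
  rewrite -(gK z) mem_imset ?inE ?fAB ?fe //; exact: can_inj fK.
by rewrite card_imset //; apply: bij_inj.
Qed.

Lemma word_iso k P Q : valid k P -> valid k Q -> pom_iso P Q ->
  word (pS P) = word (pS Q) /\ word (pT P) = word (pT Q).
Proof.
move=> vP vQ [f [fB [fl [fe [fb [fS fT]]]]]].
have gen : forall (A : {set pev P}) (B : {set pev Q}), evo_linear A -> evo_linear B ->
    (forall x, (f x \in B) = (x \in A)) -> word A = word B.
  move=> A B TA TB fAB; apply: (@eq_word_rel _ P Q A B (fun x y => f x == y)) => //.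
  - by move=> x xA; exists (f x); rewrite ?fAB.
  - move=> y yB; case: fB => g fK gK; exists (g y); last by rewrite gK.
    by rewrite -fAB gK.
  - by move=> x y x' y' _ _ _ _ /eqP <- /eqP <-.
  - by move=> x y _ _ /eqP <-.
split; apply: gen => //; [exact: valid_linearS vP | exact: valid_linearS vQ |
  exact: valid_linearT vP | exact: valid_linearT vQ].
Qed.

Lemma existsb_bij (T T' : finType) (g : T -> T') (P : pred T') : bijective g ->
  [exists s', P s'] = [exists s, P (g s)].
Proof.
case=> g' gK g'K; apply/existsP/existsP=> [[s' Ps']|[s Ps]]; last by exists (g s).
by exists (g' s'); rewrite g'K.
Qed.

Lemma iso_glue (p p' q q' : pom Sigma) :
  pom_iso p p' -> pom_iso q q' -> pom_iso (glue p q) (glue p' q').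
Proof.
move=> [f [fB [fl [fe [fb [fS fT]]]]]] [g [gB [gl [ge [gb [gS gT]]]]]].
have corr_fg x s : corr (f x) (g s) = corr x s.
  by rewrite /corr fT gS (rank_bij fB fT fe) (rank_bij gB gS ge).
have g_notS (y : {y | y \notin pS q}) : g (val y) \notin pS q' by rewrite gS (valP y).
pose h (u : pev (glue p q)) : pev (glue p' q') :=
  match u with inl x => inl (f x) | inr y => inr (exist _ (g (val y)) (g_notS y)) end.
have hB : bijective h.
  case: (fB) (gB) => f' fK f'K [g' gK g'K].
  have g'_notS (y : {y | y \notin pS q'}) : g' (val y) \notin pS q.
    by rewrite -gS g'K (valP y).
  exists (fun u => match u with
                   | inl x => inl (f' x)
                   | inr y => inr (exist _ (g' (val y)) (g'_notS y)) end).
    by case=> [x|y] /=; [rewrite fK | congr inr; apply: val_inj; rewrite /= gK].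
  by case=> [x|y] /=; [rewrite f'K | congr inr; apply: val_inj; rewrite /= g'K].
have ex_g := existsb_bij _ gB.
exists h; split=> //; split.
  case=> [x|y] [x'|y'] /=; rewrite ?fl ?fT ?gl // ex_g; try congr orb;
    apply: eq_existsb => s; try (rewrite ex_g; apply: eq_existsb => s');
    by rewrite !corr_fg gl.
split.
  case=> [x|y] [x'|y'] /=; rewrite ?fe ?ge // ex_g; try congr orb;
    apply: eq_existsb => s; try (rewrite ex_g; apply: eq_existsb => s');
    by rewrite !corr_fg ge.
split; first by case=> [x|y] /=; rewrite ?fb ?gb.
split; first by case=> [x|y]; rewrite /= /gS !inE ?fS.
case=> [x|y]; rewrite /= /gT !inE ?gT // ex_g.
by apply: eq_existsb => s; rewrite corr_fg gT.
Qed.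

End Iso.

Section Identity.
Variable Sigma : finType.

Lemma card_lt_ord n (i : 'I_n) : #|[set z : 'I_n | z < i]| = i.
Proof.
have le : i <= n := ltnW (ltn_ord i).
have -> : [set z : 'I_n | z < i] = [set widen_ord le j | j : 'I_i].
  apply/setP=> z; rewrite inE; apply/idP/imsetP=> [lt|[j _ ->]] /=.
    by exists (Ordinal lt) => //; apply: val_inj.
  exact: ltn_ord.
rewrite card_imset ?card_ord // => a b /(congr1 val) /= e; exact: val_inj.
Qed.

Lemma rank_idpom (U : seq Sigma) (A : {set pev (idpom U)}) i :
  A = setT -> rank A i = i.
Proof.
move=> ->; rewrite /rank -(card_lt_ord i); apply: eq_card => z; by rewrite !inE.
Qed.

Lemma idpom_linear (U : seq Sigma) (A : {set pev (idpom U)}) : evo_linear A.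
Proof.
split=> [x y _ _|x _|x y z _ _ _] /=; first by rewrite -neq_ltn.
  by rewrite ltnn.
exact: ltn_trans.
Qed.

Lemma word_idpom (U : seq Sigma) :
  word (pS (idpom U)) = U /\ word (pT (idpom U)) = U.
Proof.
suff word_setT : word [set: pev (idpom U)] = U by [].
have size_U : size (word [set: pev (idpom U)]) = size U.
  by rewrite size_word cardsT card_ord.
case: U size_U => [|a U] size_U; first exact: size0nil.
apply: (@eq_from_nth _ a) => // i; rewrite size_U => lti.
have := nth_word (idpom_linear setT) a (in_setT (Ordinal lti)).
by rewrite rank_idpom //= (tnth_nth a).
Qed.

Lemma idpom_valid k (U : seq Sigma) : size U <= k -> valid k (idpom U).
Proof.
move=> sk; split; first by [].
split; first by [].
split; first by [].
split; first by move=> x y /= lt; rewrite andbT; apply/eqP=> e; rewrite e ltnn in lt.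
split; first by move=> x y ne _ _ /=; rewrite -neq_ltn.
split; first by apply: (@acyclic_of_height _ _ (fun i : 'I_(size U) => val i)).
split; first by [].
split; first by [].
move=> A _; apply: leq_trans (max_card _) _; by rewrite card_ord.
Qed.

Lemma idpom_notS (U : seq Sigma) (y : {y : pev (idpom U) | y \notin pS (idpom U)}) :
  False.
Proof. by case: y => y /=; rewrite in_setT. Qed.

Lemma glue_id k (p : pom Sigma) : valid k p ->
  pom_iso p (glue p (idpom (word (pT p)))).
Proof.
move=> vp; set U := word (pT p); set I := idpom U.
have linT := valid_linearT vp.
have corrE x (i : pev I) : corr x i = (x \in pT p) && (rank (pT p) x == i).
  by rewrite /corr in_setT rank_idpom.
exists inl; split.
  exists (fun u : pev (glue p I) =>
            match u with inl x => x | inr y => False_rect _ (idpom_notS y) end) => //.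
  by case=> [x|y] //; case: (idpom_notS y).
split.
  move=> x y /=; case: (plt p x y) => //=.
  by apply/existsP=> [[s /existsP[s' /and3P[]]]].
split.
  move=> x y /=; case e: (pevo p x y) => //=.
  apply/existsP=> [[s /existsP[s' /and3P[]]]].
  rewrite !corrE => /andP[xT /eqP rx] /andP[yT /eqP ry] lt.
  by move: e; rewrite -(rank_ltE linT xT yT) rx ry lt.
split; first by [].
split; first by move=> x; rewrite /= /gS inE.
move=> x; rewrite /= /gT inE; apply/existsP/idP=> [[s /andP[]]|xT].
  by rewrite corrE => /andP[].
have lt : rank (pT p) x < size U by rewrite size_word; exact: rank_lt_card.
by exists (Ordinal lt); rewrite corrE xT eqxx in_setT.
Qed.

End Identity.
Section Assoc.
Variables (Sigma : finType) (k : nat) (A B C : pom Sigma).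
Hypotheses (vA : valid k A) (vB : valid k B) (vC : valid k C).
Hypotheses (cAB : word (pT A) = word (pS B)) (cBC : word (pT B) = word (pS C)).
Local Notation AB := (glue A B).
Local Notation BC := (glue B C).
Local Notation X := (glue AB C).
Local Notation Y := (glue A BC).
Local Notation crAB := (@corr Sigma A B).
Local Notation crBC := (@corr Sigma B C).
Local Notation crX := (@corr Sigma AB C).
Local Notation crY := (@corr Sigma A BC).
Let vAB := glue_valid vA vB cAB.
Let vBC := glue_valid vB vC cBC.

Lemma corr_A_BC x t : crY x (inl t) = crAB x t.
Proof.
case tS: (t \in pS B); last by rewrite /corr glue_S_l tS !andbF.
by rewrite /corr glue_S_l tS (rank_glueS vB vC tS).
Qed.

Lemma corr_AB_C_l x s : crX (inl x) s = [exists t, crAB x t && crBC t s].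
Proof.
apply/idP/existsP.
  case/and3P=> uT sS /eqP r.
  have xT : x \in pT A by apply/negP=> /negP nx; rewrite (glue_T_lN _ nx) in uT.
  case: (corr_exl vA vB cAB xT) => t c; exists t; rewrite c /=.
  have tT : t \in pT B by rewrite -(glue_T_lT vB c).
  by rewrite /corr tT sS -(rank_glueT vA vB cAB uT tT c) r eqxx.
case=> t /andP[c /and3P[tT sS /eqP r]].
have uT : inl x \in pT AB by rewrite (glue_T_lT vB c).
by rewrite /corr uT sS (rank_glueT vA vB cAB uT tT c) r eqxx.
Qed.

Lemma corr_AB_C_r y s : crX (inr y) s = crBC (val y) s.
Proof.
case yT: (val y \in pT B); last by rewrite /corr glue_T_r yT.
have uT : inr y \in pT AB by rewrite glue_T_r.
by rewrite /corr uT yT (rank_glueT vA vB cAB uT yT) // /glueT_rel eqxx.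
Qed.

Lemma notS_BC_l (y : {y : pev B | y \notin pS B}) : (inl (val y) : pev BC) \notin pS BC.
Proof. by rewrite glue_S_l (valP y). Qed.
Lemma notS_BC_r (z : {z : pev C | z \notin pS C}) : (inr z : pev BC) \notin pS BC.
Proof. by rewrite glue_S_r. Qed.

Definition assoc_map (u : pev X) : pev Y :=
  match u with
  | inl (inl x) => inl x
  | inl (inr y) => inr (exist _ (inl (val y)) (notS_BC_l y))
  | inr z => inr (exist _ (inr z) (notS_BC_r z))
  end.

Lemma assoc_map_A x : assoc_map (inl (inl x)) = inl x. Proof. by []. Qed.
Lemma assoc_map_B y :
  assoc_map (inl (inr y)) = inr (exist _ (inl (val y)) (notS_BC_l y)).
Proof. by []. Qed.
Lemma assoc_map_C z : assoc_map (inr z) = inr (exist _ (inr z) (notS_BC_r z)).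
Proof. by []. Qed.

Lemma assoc_map_inj : injective assoc_map.
Proof.
pose g (v : pev Y) := match v with inl _ => None | inr w => Some (val w) end.
move=> [[x|y]|z] [[x'|y']|z'] //= e; have := congr1 g e; rewrite /g /= => //.
- by case: e => ->.
- by case=> /val_inj ->.
- by case=> ->.
Qed.

Lemma assoc_map_surj v : exists u, assoc_map u = v.
Proof.
case: v => [x|[w H]]; first by exists (inl (inl x)).
case: w H => [y|z] H.
  have H' : y \notin pS B by rewrite -(@glue_S_l _ B C).
  exists (inl (inr (exist _ y H'))); rewrite assoc_map_B; congr inr; exact: val_inj.
exists (inr z); rewrite assoc_map_C; congr inr; exact: val_inj.
Qed.

Lemma assoc_map_bij : bijective assoc_map.
Proof.
apply: inj_card_bij; first exact: assoc_map_inj.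
rewrite -cardsT -(cardsT (pev X)).
apply: leq_trans (leq_imset_card assoc_map _); apply: subset_leq_card.
apply/subsetP=> v _; case: (assoc_map_surj v) => u <-; exact: imset_f.
Qed.

Lemma A_event_cases x :
  [\/ x \notin pT A /\ inl x \notin pT AB,
      exists t, [/\ crAB x t, crY x (inl t), t \notin pT B & inl x \notin pT AB] |
      exists t s, [/\ crAB x t, crY x (inl t), crBC t s & crX (inl x) s]].
Proof.
case: (boolP (x \in pT A)) => [xT|nx]; last by apply: Or31; rewrite (glue_T_lN _ nx).
case: (corr_exl vA vB cAB xT) => t c; have cy : crY x (inl t) by rewrite corr_A_BC.
case: (boolP (t \in pT B)) => [tT|nt]; last first.
  by apply: Or32; exists t; rewrite (glue_T_lT vB c).
case: (corr_exl vB vC cBC tT) => s c'; apply: Or33; exists t, s; split=> //.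
by rewrite corr_AB_C_l; apply/existsP; exists t; rewrite c c'.
Qed.

Lemma B_event_cases (y : {y : pev B | y \notin pS B}) :
  val y \notin pT B /\ (inr y : pev AB) \notin pT AB \/
  exists s, crBC (val y) s /\ crX (inr y) s.
Proof.
case: (boolP (val y \in pT B)) => [yT|ny]; last by left; rewrite glue_T_r.
by case: (corr_exl vB vC cBC yT) => s c; right; exists s; rewrite corr_AB_C_r.
Qed.

(* The side conditions [valid k _] of the gluing lemmas are closed by [//]
   using vB, vC, vAB and vBC. *)
Ltac glue_simpl := rewrite ?assoc_map_A ?assoc_map_B ?assoc_map_C
  ?(@glue_lt_ll _ k) ?(@glue_lt_rl _ k) ?glue_lt_rr
  ?(@glue_evo_ll _ k) ?glue_evo_rr ?glue_S_l ?glue_S_r ?glue_T_r //.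

Ltac glue_rewrite :=
  repeat first
  [ progress glue_simpl
  | match goal with c : is_true (corr _ _) |- _ => progress
      rewrite ?(glue_lt_lrT (k:=k) _ c) ?(glue_evo_lrT (k:=k) _ c)
              ?(glue_evo_rlT (k:=k) _ c) ?(glue_T_lT (k:=k) _ c) // end
  | match goal with n : is_true (_ \notin _) |- _ => progress
      rewrite ?(glue_lt_lrN _ n) ?(glue_evo_lrN _ n) ?(glue_evo_rlN _ n)
              ?(glue_T_lN _ n) // end ].

Ltac A_cases x := case: (A_event_cases x) =>
  [[? ?]|[? [? ? ? ?]]|[? [? [? ? ? ?]]]]; glue_rewrite.
Ltac B_cases y := case: (B_event_cases y) => [[? ?]|[? [? ?]]]; glue_rewrite.

Lemma assoc_map_lt u v : plt Y (assoc_map u) (assoc_map v) = plt X u v.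
Proof.
case: u v => [[x|y]|z] [[x'|y']|z']; glue_rewrite; [A_cases x | A_cases x | B_cases y].
Qed.

Lemma assoc_map_evo u v : pevo Y (assoc_map u) (assoc_map v) = pevo X u v.
Proof.
case: u v => [[x|y]|z] [[x'|y']|z']; glue_rewrite;
  [A_cases x | A_cases x | A_cases x' | B_cases y | A_cases x' | B_cases y'].
Qed.

Lemma assoc_map_S u : (assoc_map u \in pS Y) = (u \in pS X).
Proof. by case: u => [[x|y]|z]; glue_rewrite. Qed.

Lemma assoc_map_T u : (assoc_map u \in pT Y) = (u \in pT X).
Proof. case: u => [[x|y]|z]; glue_rewrite; [A_cases x | B_cases y]. Qed.

Lemma glue_assoc : pom_iso X Y.
Proof.
exists assoc_map; split; first exact: assoc_map_bij.
split; first exact: assoc_map_lt.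
split; first exact: assoc_map_evo.
by split; [case=> [[]|] | split; [exact: assoc_map_S | exact: assoc_map_T]].
Qed.

End Assoc.

Section Classes.
Variables (Sigma : finType) (k : nat).
Local Notation I := (iipk Sigma k).

Lemma rep_spec (a : I) : valid k (rep a) /\ proj1_sig a = pom_iso (rep a).
Proof. by rewrite /rep; case: constructive_indefinite_description. Qed.

Lemma iso_of_eq_class (p q : pom Sigma) : pom_iso p = pom_iso q -> pom_iso p q.
Proof. by move=> ->; apply: iso_refl. Qed.

Lemma eq_class_of_iso (p q : pom Sigma) : pom_iso p q -> pom_iso p = pom_iso q.
Proof.
move=> pq; apply: functional_extensionality => r; apply: propositional_extensionality.
by split; [apply: iso_trans (iso_sym pq) | apply: iso_trans pq].
Qed.

Lemma iipk_eq (a b : I) : pom_iso (rep a) (rep b) -> a = b.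
Proof.
move=> ab; have e : proj1_sig a = proj1_sig b.
  by rewrite (rep_spec a).2 (rep_spec b).2; apply: eq_class_of_iso.
case: a b e {ab} => [A hA] [B hB] /= e; subst B.
by congr exist; apply: proof_irrelevance.
Qed.

Lemma icomp_spec (a b : I) : itgt a = isrc b ->
  valid k (glue (rep a) (rep b)) /\ pom_iso (rep (icomp a b)) (glue (rep a) (rep b)).
Proof.
move=> ab; have vg := glue_valid (rep_spec a).1 (rep_spec b).1 ab.
split=> //; rewrite /icomp; case: excluded_middle_informative => [h|[]]; last first.
  by exists (glue (rep a) (rep b)).
by apply: iso_sym; apply: iso_of_eq_class; rewrite -(rep_spec (exist _ _ h)).2.
Qed.

Lemma icomp_src (a b : I) : itgt a = isrc b -> isrc (icomp a b) = isrc a.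
Proof.
move=> ab; have [vg h] := icomp_spec ab.
rewrite /isrc (word_iso (rep_spec _).1 vg h).1.
exact: word_glueS (rep_spec a).1 (rep_spec b).1 ab.
Qed.

Lemma icomp_tgt (a b : I) : itgt a = isrc b -> itgt (icomp a b) = itgt b.
Proof.
move=> ab; have [vg h] := icomp_spec ab.
rewrite /itgt (word_iso (rep_spec _).1 vg h).2.
exact: word_glueT (rep_spec a).1 (rep_spec b).1 ab.
Qed.

Lemma icomp_assoc (a b c : I) : itgt a = isrc b -> itgt b = isrc c ->
  icomp (icomp a b) c = icomp a (icomp b c).
Proof.
move=> ab bc; have ab_c : itgt (icomp a b) = isrc c by rewrite icomp_tgt.
have a_bc : itgt a = isrc (icomp b c) by rewrite icomp_src.
apply: iipk_eq; apply: iso_trans (icomp_spec ab_c).2 _.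
apply: iso_trans (iso_glue (icomp_spec ab).2 (iso_refl _)) _.
apply: iso_trans (glue_assoc (rep_spec a).1 (rep_spec b).1 (rep_spec c).1 ab bc) _.
apply: iso_trans (iso_glue (iso_refl _) (iso_sym (icomp_spec bc).2)) _.
exact: iso_sym (icomp_spec a_bc).2.
Qed.

Lemma idpom_tgt_valid (a : I) : valid k (idpom (itgt a)).
Proof.
apply: idpom_valid; rewrite size_word; have va := (rep_spec a).1.
by apply: (valid_width va); apply/antichainP=> x y xT _; apply: (valid_T va xT).
Qed.

Lemma is_id_spec (a e : I) : is_id e (itgt a) ->
  isrc e = itgt a /\ pom_iso (rep e) (idpom (itgt a)).
Proof.
move=> ide; have [ve e_rep] := rep_spec e.
have e_id : pom_iso (rep e) (idpom (itgt a)).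
  by apply: iso_sym; apply: iso_of_eq_class; rewrite -ide e_rep.
split=> //; rewrite /isrc (word_iso ve (idpom_tgt_valid a) e_id).1.
exact: (word_idpom _).1.
Qed.

Lemma icomp_id (a e : I) : is_id e (itgt a) -> icomp a e = a.
Proof.
move=> ide; have [e_src e_id] := is_id_spec ide.
have ae : itgt a = isrc e by rewrite e_src.
apply: iipk_eq; apply: iso_trans (icomp_spec ae).2 _.
apply: iso_trans (iso_glue (iso_refl _) e_id) _.
exact: iso_sym (glue_id (rep_spec a).1).
Qed.

Lemma is_id_exists (a : I) : exists e : I, is_id e (itgt a).
Proof.
exists (exist _ (pom_iso (idpom (itgt a))) (ex_intro _ _ (conj (idpom_tgt_valid a) erefl))).
by [].
Qed.

End Classes.

Section Suffixes.
Variables (Sigma : finType) (k : nat) (L : iipk Sigma k -> Prop).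
Local Notation I := (iipk Sigma k).

Lemma srep_spec (t : suff L) : proj1_sig t = quo L (srep t).
Proof. by rewrite /srep; case: constructive_indefinite_description. Qed.

Lemma suff_eq (t t' : suff L) : proj1_sig t = proj1_sig t' -> t = t'.
Proof.
by case: t t' => [u hu] [u' hu'] /= e; subst u'; congr exist; apply: proof_irrelevance.
Qed.

Lemma phi_srep (t : suff L) : phi L (srep t) = t.
Proof. by apply: suff_eq; rewrite [RHS]srep_spec. Qed.

Lemma ssrcE (t : suff L) : ssrc t = isrc (srep t).
Proof. by rewrite /ssrc srep_spec. Qed.

Lemma stgtE (t : suff L) : stgt t = itgt (srep t).
Proof. by rewrite /stgt srep_spec. Qed.

Lemma quo_ext (P P' : I) : isrc P = isrc P' -> itgt P = itgt P' ->
  (forall Q, isrc Q = itgt P -> L (icomp P Q) <-> L (icomp P' Q)) ->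
  quo L P = quo L P'.
Proof.
move=> eq_src eq_tgt eq_L; rewrite /quo eq_src eq_tgt; congr pair.
apply: functional_extensionality => Q; apply: propositional_extensionality.
by split=> -[QP LPQ]; split=> //; apply/(eq_L Q); rewrite // QP eq_tgt.
Qed.

Lemma quo_L (P P' Q : I) : quo L P = quo L P' -> isrc Q = itgt P ->
  L (icomp P Q) <-> L (icomp P' Q).
Proof.
move=> e QP; have eq_tgt : itgt P = itgt P' by move: (congr1 (fun t => t.1.2) e).
have := congr1 (fun t => t.2 Q) e => /= eq_quo.
have QP' : isrc Q = itgt P' by rewrite -eq_tgt.
split=> LPQ.
  by have [] : isrc Q = itgt P' /\ L (icomp P' Q) by rewrite -eq_quo.
by have [] : isrc Q = itgt P /\ L (icomp P Q) by rewrite eq_quo.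
Qed.

Lemma quo_icomp (P P' Q : I) : quo L P = quo L P' -> itgt P = isrc Q ->
  quo L (icomp P Q) = quo L (icomp P' Q).
Proof.
move=> e PQ; have eq_src : isrc P = isrc P' by move: (congr1 (fun t => t.1.1) e).
have eq_tgt : itgt P = itgt P' by move: (congr1 (fun t => t.1.2) e).
have P'Q : itgt P' = isrc Q by rewrite -eq_tgt.
apply: quo_ext; rewrite ?icomp_src ?icomp_tgt // => R QR.
rewrite !icomp_assoc //; apply: quo_L e _.
by rewrite icomp_src.
Qed.

Lemma phi_icomp (P Q : I) : itgt P = isrc Q -> phi L (icomp P Q) = sact (phi L P) Q.
Proof.
move=> PQ; apply: suff_eq => /=; apply: quo_icomp => //.
by rewrite -srep_spec.
Qed.

Lemma suff_is_module : is_module (@ssrc _ _ L) (@stgt _ _ L) (@sact _ _ L).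
Proof.
split=> [t a | t a | t a b].
- rewrite stgtE => ta; rewrite /sact /ssrc /stgt /= -/(ssrc t) ssrcE.
  by rewrite icomp_src ?icomp_tgt.
- by rewrite stgtE /sact => /icomp_id ->; rewrite phi_srep.
- rewrite stgtE => ta ab; have -> : sact t a = phi L (icomp (srep t) a) by [].
  by rewrite -phi_icomp ?icomp_tgt // icomp_assoc.
Qed.

Lemma phi_is_hom : is_hom (@isrc Sigma k) (@itgt Sigma k) (@icomp Sigma k)
  (@ssrc _ _ L) (@stgt _ _ L) (@sact _ _ L) (phi L).
Proof. by split=> // P Q; apply: phi_icomp. Qed.

(* Gluing the identity on [T_P] recovers [P] from its suffix set. *)
Lemma L_phiE (P : I) : L P <-> Jset (phi L P).
Proof.
split=> [LP | [P' [LP' /(congr1 (@proj1_sig _ _)) /= e]]]; first by exists P.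
have [idT isid] := is_id_exists P.
have eq_tgt : itgt P = itgt P' by move: (congr1 (fun t => t.1.2) e).
have isid' : is_id idT (itgt P') by rewrite -eq_tgt.
have idT_src : isrc idT = itgt P by have [] := is_id_spec isid.
by rewrite -(icomp_id isid) (quo_L e) ?(icomp_id isid').
Qed.

Section Universality.
Variables (M : Type) (msrc mtgt : M -> seq Sigma) (act : M -> I -> M).
Variables (K : M -> Prop) (psi : I -> M).
Hypothesis psi_hom : is_hom (@isrc Sigma k) (@itgt Sigma k) (@icomp Sigma k)
  msrc mtgt act psi.
Hypothesis psi_surj : forall m, exists P, psi P = m.
Hypothesis L_psiE : forall P, L P <-> K (psi P).

Lemma phi_psi_eq (P P' : I) : psi P = psi P' -> phi L P = phi L P'.
Proof.
have [psi_st psi_act] := psi_hom.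
move=> e; apply: suff_eq => /=; have [sP tP] := psi_st P; have [sP' tP'] := psi_st P'.
apply: quo_ext; [by rewrite -sP -sP' e | by rewrite -tP -tP' e | move=> Q QP].
have PQ : itgt P = isrc Q by rewrite QP.
have P'Q : itgt P' = isrc Q by rewrite -tP' -e tP.
by rewrite !L_psiE (psi_act _ _ PQ) (psi_act _ _ P'Q) e.
Qed.

Let pre (m : M) : I := proj1_sig (constructive_indefinite_description _ (psi_surj m)).

Lemma psi_pre m : psi (pre m) = m.
Proof. by rewrite /pre; case: constructive_indefinite_description. Qed.

Let f (m : M) : suff L := phi L (pre m).

Lemma f_psi P : f (psi P) = phi L P.
Proof. by apply: phi_psi_eq; rewrite psi_pre. Qed.

Lemma f_is_hom : is_hom msrc mtgt act (@ssrc _ _ L) (@stgt _ _ L) (@sact _ _ L) f.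
Proof.
have [psi_st psi_act] := psi_hom.
split=> [m | m a]; have [s_pre t_pre] := psi_st (pre m); rewrite psi_pre in s_pre t_pre.
  by rewrite /f /ssrc /stgt /= s_pre t_pre.
move=> ma; rewrite -{1}(psi_pre m) -psi_act -?t_pre // f_psi.
by apply: phi_icomp; rewrite -t_pre.
Qed.

Lemma suff_universal : exists f : M -> suff L,
  is_hom msrc mtgt act (@ssrc _ _ L) (@stgt _ _ L) (@sact _ _ L) f /\
  (forall t, exists m, f m = t) /\
  (forall t, Jset t <-> exists m, K m /\ f m = t) /\
  (forall P, f (psi P) = phi L P).
Proof.
exists f; split; first exact: f_is_hom.
split; first by move=> t; exists (psi (srep t)); rewrite f_psi phi_srep.
split=> [t|]; last exact: f_psi.
split=> [[P [LP ->]] | [m [Km <-]]].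
  by exists (psi P); rewrite f_psi -L_psiE.
by exists (pre m); split=> //; apply/L_psiE; rewrite psi_pre.
Qed.

End Universality.
End Suffixes.

Theorem mainTheorem5 (Sigma : finType) (k : nat) (L : iipk Sigma k -> Prop) :
  is_module (@ssrc _ _ L) (@stgt _ _ L) (@sact _ _ L) /\
  is_hom (@isrc Sigma k) (@itgt Sigma k) (@icomp Sigma k)
         (@ssrc _ _ L) (@stgt _ _ L) (@sact _ _ L) (phi L) /\
  (forall P, L P <-> Jset (phi L P)) /\
  (forall (M : Type) (msrc mtgt : M -> seq Sigma) (act : M -> iipk Sigma k -> M)
          (K : M -> Prop) (psi : iipk Sigma k -> M),
     is_module msrc mtgt act ->
     is_hom (@isrc Sigma k) (@itgt Sigma k) (@icomp Sigma k) msrc mtgt act psi ->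
     (forall m, exists P, psi P = m) ->
     (forall P, L P <-> K (psi P)) ->
     exists f : M -> suff L,
       is_hom msrc mtgt act (@ssrc _ _ L) (@stgt _ _ L) (@sact _ _ L) f /\
       (forall t, exists m, f m = t) /\
       (forall t, Jset t <-> exists m, K m /\ f m = t) /\
       (forall P, f (psi P) = phi L P)).
Proof.
split; first exact: suff_is_module.
split; first exact: phi_is_hom.
split; first exact: L_phiE.
move=> M msrc mtgt act K psi _ psi_hom psi_surj L_psiE.
exact: suff_universal psi_hom psi_surj L_psiE.
Qed.
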